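(* Let $m>0$, $w>v>0$ and $s,u\geq 0$. Let $\mathfrak{n}$ be the five-dimensional real Lie algebra with basis $\{E_1,\dots,E_5\}$ whose only non-vanishing brackets (up to antisymmetry) are $$[E_1,E_2]=mE_3+sE_4+uE_5,\qquad [E_1,E_3]=vE_4,\qquad [E_2,E_3]=wE_5.$$ Equip the corresponding simply connected nilpotent Lie group with the left-invariant Riemannian metric for which $\{E_1,\dots,E_5\}$ is orthonormal. Then this metric is not an algebraic Ricci soliton.
   Context: Let $G$ be a Lie group with Lie algebra $\mathfrak{g}$ and let $g$ be a left-invariant Riemannian metric on $G$. Let $\mathrm{Ric}$ denote the $(1,1)$ Ricci tensor of $g$, viewed as a linear endomorphism of $\mathfrak{g}$. The metric $g$ is an algebraic Ricci soliton if there are a real number $c$ and a derivation $D$ of $\mathfrak{g}$ such that $\mathrm{Ric}=c\,\mathrm{Id}+D$. *)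

(* A finite-dimensional real Lie algebra with an inner product
   is modelled on row vectors 'rV[R]_n, the fixed basis {E_i} being the standard
   basis (delta_mx 0 i), which is orthonormal for the standard dot product.
   R ranges over all real fields (the statement is purely algebraic). *)
From HB Require Import structures.
From mathcomp Require Import all_boot all_order all_algebra.
Set Implicit Arguments. Unset Strict Implicit. Unset Printing Implicit Defensive.
Import Order.TTheory GRing.Theory Num.Theory.
Local Open Scope ring_scope.

Section LeftInvariantGeometry.
Variables (R : realFieldType) (n : nat).
Variable br : 'rV[R]_n -> 'rV[R]_n -> 'rV[R]_n.

Definition dotv (x y : 'rV[R]_n) : R := (x *m y^T) 0 0.
Definition bvec (i : 'I_n) : 'rV[R]_n := delta_mx 0 i.

(* Levi-Civita connection of the left-invariant metric, by the Koszul formula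
   2 g(nabla_X Y, Z) = g([X,Y],Z) - g([Y,Z],X) + g([Z,X],Y). *)
Definition lc_nabla (x y : 'rV[R]_n) : 'rV[R]_n :=
  \sum_(k < n) ((dotv (br x y) (bvec k) - dotv (br y (bvec k)) x
                 + dotv (br (bvec k) x) y) / 2) *: bvec k.

Definition curv (x y z : 'rV[R]_n) : 'rV[R]_n :=
  lc_nabla x (lc_nabla y z) - lc_nabla y (lc_nabla x z) - lc_nabla (br x y) z.

Definition ric (y z : 'rV[R]_n) : R :=
  \sum_(i < n) dotv (curv (bvec i) y z) (bvec i).

(* (1,1) Ricci tensor as a matrix acting on row vectors (x |-> x *m RicM),
   so that g(Ric E_i, E_j) = ric(E_i, E_j). *)
Definition RicM : 'M[R]_n := \matrix_(i, j) ric (bvec i) (bvec j).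

Definition is_derivation (D : 'M[R]_n) : Prop :=
  forall x y, br x y *m D = br (x *m D) y + br x (y *m D).

Definition algebraic_ricci_soliton : Prop :=
  exists (c : R) (D : 'M[R]_n), is_derivation D /\ RicM = c%:M + D.

End LeftInvariantGeometry.

(* The five-dimensional nilpotent Lie algebra of the statement, basis
   E_1..E_5 = bvec 0 .. bvec 4:
   [E1,E2] = m E3 + s E4 + u E5, [E1,E3] = v E4, [E2,E3] = w E5. *)
Definition i5 (k : nat) : 'I_5 := inord k.

Definition nbr {R : realFieldType} (m s u v w : R) (x y : 'rV[R]_5) : 'rV[R]_5 :=
  let p i j := x 0 (i5 i) * y 0 (i5 j) - x 0 (i5 j) * y 0 (i5 i) in
  p 0%N 1%N *: (m *: bvec R (i5 2) + s *: bvec R (i5 3) + u *: bvec R (i5 4))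
  + p 0%N 2%N *: (v *: bvec R (i5 3))
  + p 1%N 2%N *: (w *: bvec R (i5 4)).

(* Write E_1, ..., E_5 for the basis (indexed 0..4 below).  If Ric = c Id + D
   with D a derivation, then D = Ric - c Id is known entrywise from the Ricci
   tensor.  The derivation identity applied to [E_1,E_3] = v E_4 and
   [E_2,E_3] = w E_5, read off along E_3, gives m v s = 0 and m w u = 0, so
   s = u = 0; read off along E_4 and E_5 it then gives
   c = -(3v^2 + w^2)/2 = -(3w^2 + v^2)/2, which forces v^2 = w^2. *)

From HB Require Import structures.
From mathcomp Require Import all_boot all_order all_algebra.
From mathcomp Require Import ring lra.
Import Order.TTheory GRing.Theory Num.Theory.
Local Open Scope ring_scope.

Section KoszulCoordinates.
Variables (R : realFieldType) (n : nat) (br : 'rV[R]_n -> 'rV[R]_n -> 'rV[R]_n).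

Lemma dotv_bvecr (x : 'rV[R]_n) i : dotv x (bvec R i) = x 0 i.
Proof.
rewrite /dotv mxE (bigD1 i) //= big1 => [|j ji]; rewrite !mxE ?eqxx ?mulr1 ?addr0 //.
by rewrite (negbTE ji) andbF mulr0.
Qed.

Lemma lc_nablaE x y k : lc_nabla br x y 0 k =
  (br x y 0 k - dotv (br y (bvec R k)) x + dotv (br (bvec R k) x) y) / 2.
Proof.
rewrite /lc_nabla summxE (bigD1 k) //= big1 => [|j jk]; rewrite !mxE ?eqxx ?mulr1.
  by rewrite dotv_bvecr addr0.
by rewrite eq_sym (negbTE jk) mulr0.
Qed.

Lemma ricE y z : ric br y z = \sum_i curv br (bvec R i) y z 0 i.
Proof. by apply: eq_bigr => i _; rewrite dotv_bvecr. Qed.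

Lemma soliton_derivation : algebraic_ricci_soliton br ->
  exists c, is_derivation br (RicM br - c%:M).
Proof. by case=> c [D [derD ->]]; exists c; rewrite addrC addKr. Qed.

End KoszulCoordinates.

Lemma i5_val k : (k < 5)%N -> val (i5 k) = k.
Proof. exact: inordK. Qed.

Lemma i5_eq a b : (a < 5)%N -> (b < 5)%N -> (i5 a == i5 b) = (a == b).
Proof. by move=> a5 b5; rewrite -val_eqE /= !i5_val. Qed.

Lemma sum_ord5 (V : nmodType) (F : 'I_5 -> V) :
  \sum_k F k = F (i5 0) + F (i5 1) + F (i5 2) + F (i5 3) + F (i5 4).
Proof.
rewrite !big_ord_recr big_ord0 /= add0r.
by congr (_ + _ + _ + _ + _); congr F; apply: val_inj; rewrite /= i5_val.
Qed.

Section CoordinateModel.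
Variables (R : realFieldType) (m s u v w : R).
Notation br := (nbr m s u v w).
Notation E k := (bvec R (i5 k)).

(* Row vectors are transported to a record of five coordinates, on which [cbv]
   evaluates brackets, connection and curvature at basis vectors symbolically
   before [field] normalizes.  [cnabla] is the Koszul formula for [nbr] solved
   in coordinates. *)
Record coords5 := Coords5 { c0 : R; c1 : R; c2 : R; c3 : R; c4 : R }.

Definition coords (x : 'rV[R]_5) : coords5 :=
  Coords5 (x 0 (i5 0)) (x 0 (i5 1)) (x 0 (i5 2)) (x 0 (i5 3)) (x 0 (i5 4)).

Definition cproj (k : nat) (X : coords5) : R :=
  match k with 0 => c0 X | 1 => c1 X | 2 => c2 X | 3 => c3 X | _ => c4 X end.

Definition cbasis (k : nat) : coords5 :=
  match k with
  | 0 => Coords5 1 0 0 0 0 | 1 => Coords5 0 1 0 0 0 | 2 => Coords5 0 0 1 0 0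
  | 3 => Coords5 0 0 0 1 0 | _ => Coords5 0 0 0 0 1 end.

Definition cdot (X Y : coords5) : R :=
  c0 X * c0 Y + c1 X * c1 Y + c2 X * c2 Y + c3 X * c3 Y + c4 X * c4 Y.

Definition cbr (X Y : coords5) : coords5 :=
  let: Coords5 x0 x1 x2 _ _ := X in let: Coords5 y0 y1 y2 _ _ := Y in
  Coords5 0 0 (m * (x0 * y1 - x1 * y0))
    (s * (x0 * y1 - x1 * y0) + v * (x0 * y2 - x2 * y0))
    (u * (x0 * y1 - x1 * y0) + w * (x1 * y2 - x2 * y1)).

Definition cnabla (X Y : coords5) : coords5 :=
  let: Coords5 x0 x1 x2 x3 x4 := X in let: Coords5 y0 y1 y2 y3 y4 := Y in
  Coords5
    ((m * (x1 * y2 + x2 * y1) + s * (x1 * y3 + x3 * y1) + u * (x1 * y4 + x4 * y1)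
      + v * (x2 * y3 + x3 * y2)) / 2)
    ((- m * (x0 * y2 + x2 * y0) - s * (x0 * y3 + x3 * y0) - u * (x0 * y4 + x4 * y0)
      + w * (x2 * y4 + x4 * y2)) / 2)
    ((m * (x0 * y1 - x1 * y0) - v * (x0 * y3 + x3 * y0) - w * (x1 * y4 + x4 * y1)) / 2)
    ((s * (x0 * y1 - x1 * y0) + v * (x0 * y2 - x2 * y0)) / 2)
    ((u * (x0 * y1 - x1 * y0) + w * (x1 * y2 - x2 * y1)) / 2).

Definition csub (X Y : coords5) : coords5 :=
  Coords5 (c0 X - c0 Y) (c1 X - c1 Y) (c2 X - c2 Y) (c3 X - c3 Y) (c4 X - c4 Y).

Definition ccurv (X Y Z : coords5) : coords5 :=
  csub (csub (cnabla X (cnabla Y Z)) (cnabla Y (cnabla X Z))) (cnabla (cbr X Y) Z).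

Definition cric (a b : nat) : R :=
  \sum_(k < 5) cproj k (ccurv (cbasis k) (cbasis a) (cbasis b)).

Lemma cproj_coords k x : (k < 5)%N -> cproj k (coords x) = x 0 (i5 k).
Proof. by case: k => [|[|[|[|[|]]]]]. Qed.

Lemma coords_bvec k : (k < 5)%N -> coords (E k) = cbasis k.
Proof.
move=> k5; rewrite /coords /bvec !mxE /= !i5_eq //.
by case: k k5 => [|[|[|[|[|]]]]].
Qed.

Lemma dotv_coords x y : dotv x y = cdot (coords x) (coords y).
Proof. by rewrite /dotv mxE sum_ord5 !mxE. Qed.

Lemma coords_nbr x y : coords (br x y) = cbr (coords x) (coords y).
Proof. by rewrite /coords /nbr !mxE !i5_eq //=; congr Coords5; ring. Qed.

Lemma nbr_coord k x y : (k < 5)%N -> br x y 0 (i5 k) = cproj k (cbr (coords x) (coords y)).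
Proof. by move=> k5; rewrite -coords_nbr cproj_coords. Qed.

Lemma coords_lc_nabla x y : coords (lc_nabla br x y) = cnabla (coords x) (coords y).
Proof.
rewrite [LHS]/coords !lc_nablaE !dotv_coords !coords_nbr !nbr_coord // !coords_bvec //.
by cbv [cbr cnabla cproj cdot cbasis coords]; cbn [c0 c1 c2 c3 c4]; congr Coords5; field.
Qed.

Lemma coords_sub x y : coords (x - y) = csub (coords x) (coords y).
Proof. by rewrite /coords !mxE. Qed.

Lemma coords_curv x y z :
  coords (curv br x y z) = ccurv (coords x) (coords y) (coords z).
Proof. by rewrite /curv !coords_sub !coords_lc_nabla coords_nbr. Qed.

Lemma ric_cric a b : (a < 5)%N -> (b < 5)%N -> ric br (E a) (E b) = cric a b.
Proof.
move=> a5 b5; rewrite ricE; apply: eq_bigr => k _.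
by rewrite -[in LHS](inord_val k) -cproj_coords // coords_curv !coords_bvec ?ltn_ord.
Qed.

Ltac ricci_entry :=
  rewrite ric_cric // /cric !big_ord_recr big_ord0 /=;
  by cbv [ccurv csub cnabla cbr cbasis cproj]; cbn [c0 c1 c2 c3 c4]; field.

Lemma ric00 : ric br (E 0) (E 0) = - (m ^+ 2 + s ^+ 2 + u ^+ 2 + v ^+ 2) / 2.
Proof. ricci_entry. Qed.
Lemma ric11 : ric br (E 1) (E 1) = - (m ^+ 2 + s ^+ 2 + u ^+ 2 + w ^+ 2) / 2.
Proof. ricci_entry. Qed.
Lemma ric20 : ric br (E 2) (E 0) = u * w / 2.
Proof. ricci_entry. Qed.
Lemma ric21 : ric br (E 2) (E 1) = - (s * v) / 2.
Proof. ricci_entry. Qed.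
Lemma ric22 : ric br (E 2) (E 2) = (m ^+ 2 - v ^+ 2 - w ^+ 2) / 2.
Proof. ricci_entry. Qed.
Lemma ric32 : ric br (E 3) (E 2) = m * s / 2.
Proof. ricci_entry. Qed.
Lemma ric33 : ric br (E 3) (E 3) = (s ^+ 2 + v ^+ 2) / 2.
Proof. ricci_entry. Qed.
Lemma ric42 : ric br (E 4) (E 2) = m * u / 2.
Proof. ricci_entry. Qed.
Lemma ric44 : ric br (E 4) (E 4) = (u ^+ 2 + w ^+ 2) / 2.
Proof. ricci_entry. Qed.

Lemma nbr_derivation_constraints (D : 'M[R]_5) : is_derivation br D ->
  let d i j := D (i5 i) (i5 j) in
  [/\ v * d 3 2 = m * d 2 1, v * d 3 3 = v * d 0 0 + s * d 2 1 + v * d 2 2,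
      w * d 4 2 = - (m * d 2 0) & w * d 4 4 = w * d 1 1 - u * d 2 0 + w * d 2 2].
Proof.
move=> derD d.
have coord k i j : (br (E i) (E j) *m D) 0 (i5 k)
    = br (row (i5 i) D) (E j) 0 (i5 k) + br (E i) (row (i5 j) D) 0 (i5 k).
  by rewrite derD !rowE mxE.
have coords_row i : coords (row (i5 i) D) =
    Coords5 (d i 0) (d i 1) (d i 2) (d i 3) (d i 4) by rewrite /coords !mxE.
move: (coord 2%N 0%N 2%N) (coord 3%N 0%N 2%N) (coord 2%N 1%N 2%N) (coord 4%N 1%N 2%N).
rewrite !nbr_coord // !coords_row !coords_bvec //.
rewrite !mxE !sum_ord5 !nbr_coord // !coords_bvec //.
cbv [cbr cproj cbasis]; cbn [c0 c1 c2 c3 c4].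
rewrite /d => e32 e33 e42 e44; split; lra.
Qed.

End CoordinateModel.

Theorem mainTheorem9 (R : realFieldType) (m s u v w : R) :
  0 < m -> 0 < v -> v < w -> 0 <= s -> 0 <= u ->
  ~ algebraic_ricci_soliton (nbr m s u v w).
Proof.
move=> m_gt0 v_gt0 lt_vw _ _ /soliton_derivation[c /nbr_derivation_constraints].
rewrite /= !mxE ric00 ric11 ric20 ric21 ric22 ric32 ric33 ric42 ric44 !i5_eq //=.
rewrite !mulr0n !mulr1n !subr0 => -[e32 e33 e42 e44].
have w_gt0 : 0 < w by apply: lt_trans lt_vw.
have m0 := lt0r_neq0 m_gt0; have v0 := lt0r_neq0 v_gt0; have w0 := lt0r_neq0 w_gt0.
have s0 : s = 0 by apply: (mulfI (mulf_neq0 m0 v0)); lra.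
have u0 : u = 0 by apply: (mulfI (mulf_neq0 m0 w0)); lra.
subst s u.
have cv : c = - (3 * v ^+ 2 + w ^+ 2) / 2 by apply: (mulfI v0); lra.
have cw : c = - (3 * w ^+ 2 + v ^+ 2) / 2 by apply: (mulfI w0); lra.
have : v ^+ 2 < w ^+ 2 by nra.
lra.
Qed.
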